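(* Let $d\ge1$ and $\delta=(1\,2\,\cdots\,d)\in\mathrm{Sym}_d$. For any left-right matching, the associated top and bottom permutations satisfy $\pi^T\cdot\pi^B=\delta$; for any top-bottom matching, the associated left and right permutations satisfy $\pi^L\cdot\pi^R=\delta$.
   Context: Place $4d$ points on the boundary circle of a closed disk, labeled in counterclockwise cyclic order $T_1,L_1,B_1,R_1,T_2,L_2,B_2,R_2,\dots,T_d,L_d,B_d,R_d$. A left-right matching is a partition of $\{L_1,R_1,\dots,L_d,R_d\}$ into $d$ pairs that can be joined by pairwise disjoint arcs in the disk (a noncrossing perfect matching). Removing these arcs splits the disk into regions; the top partition $[\lambda]^T$ of $[d]$ puts $i,j$ in the same block iff $T_i,T_j$ lie in the same region, and the bottom partition $[\lambda]^B$ is defined likewise from the $B_i$. A top-bottom matching is defined in the same way with the $T$'s and $B$'s (cyclic order $T_1,B_1,\dots,T_d,B_d$), and it determines left and right partitions $[\lambda]^L,[\lambda]^R$ from the $L_i$'s and $R_i$'s. For a set partition of $[d]$, its permutation turns each block into a cycle listing its elements in increasing order; $\pi^T,\pi^B,\pi^L,\pi^R$ are the permutations of $[\lambda]^T,[\lambda]^B,[\lambda]^L,[\lambda]^R$. Products compose right to left (in $\pi^T\cdot\pi^B$, $\pi^B$ is applied first). *)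

From mathcomp Require Import all_boot.
Set Implicit Arguments. Unset Strict Implicit. Unset Printing Implicit Defensive.

(* Boundary points are encoded as positions 0 .. 4d-1 on the circle in
   counterclockwise order; with 0-based i : 'I_d,
     T_{i+1} = 4i, L_{i+1} = 4i+1, B_{i+1} = 4i+2, R_{i+1} = 4i+3. *)

(* z lies strictly inside the boundary arc cut off by the chord {a,b}
   (the arc not containing position 0). *)
Definition inside (a b z : nat) : bool := (minn a b < z) && (z < maxn a b).

(* m is a noncrossing perfect matching of the point set S (only its values on
   S matter): an involution without fixed points on S whose chords pairwise
   do not cross. *)
Definition nc_matching (S : pred nat) (m : nat -> nat) : Prop :=
  (forall p, S p -> [/\ S (m p), m p != p & m (m p) = p]) /\
  (forall p q, S p -> S q -> inside p (m p) q = inside p (m p) (m q)).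

(* Two boundary points x, y (not endpoints of arcs) lie in the same region of
   the disk cut by the arcs iff no arc separates them. *)
Definition same_region (d : nat) (S : pred nat) (m : nat -> nat) (x y : nat) : bool :=
  [forall p : 'I_(4 * d), S p ==> (inside p (m p) x == inside p (m p) y)].

(* The permutation of a set partition (given by its equivalence relation r):
   each block becomes the cycle listing its elements in increasing order. *)
Definition block_perm (d : nat) (r : rel 'I_d) (i : 'I_d) : 'I_d :=
  next [seq j <- enum 'I_d | r i j] i.

Definition S_LR (d : nat) : pred nat := fun p => (p < 4 * d) && odd p.
Definition S_TB (d : nat) : pred nat := fun p => (p < 4 * d) && ~~ odd p.

Definition pi_T d m := block_perm (fun i j : 'I_d => same_region d (S_LR d) m (4 * i) (4 * j)).
Definition pi_B d m := block_perm (fun i j : 'I_d => same_region d (S_LR d) m (4 * i + 2) (4 * j + 2)).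
Definition pi_L d m := block_perm (fun i j : 'I_d => same_region d (S_TB d) m (4 * i + 1) (4 * j + 1)).
Definition pi_R d m := block_perm (fun i j : 'I_d => same_region d (S_TB d) m (4 * i + 3) (4 * j + 3)).

(* delta = (1 2 ... d) is ordS : i |-> (i+1) mod d on 'I_d (0-based). *)

(* Fix i and let c be the boundary point right after B_i, namely R_i, for a
   left-right matching, resp. right after R_i, namely T_(i+1), for a
   top-bottom one; let q be its partner.  The arc endpoints strictly between c
   and q are matched among themselves, so there is an even number of them; as
   endpoints occupy every other boundary position, q = c + 2 (mod 4), i.e. q is
   some L_k, resp. B_k.  No arc crosses the chord {c, q}, so the two free
   points flanking it on either side share a region: B_i ~ B_k and
   T_k ~ T_(i+1), resp. R_i ~ R_k and L_k ~ L_(i+1).  Every other point of the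
   same kind cyclically between them lies on the other side of the chord,
   hence pi^B i = k and pi^T k = i + 1, resp. pi^R i = k and pi^L k = i + 1. *)

Set Warnings "-notation-overridden".
From mathcomp Require Import all_boot zify.
Set Implicit Arguments. Unset Strict Implicit. Unset Printing Implicit Defensive.

Lemma fixfree_involution_size_even (T : eqType) (f : T -> T) (s : seq T) :
  uniq s -> {in s, forall z, [/\ f z \in s, f z != z & f (f z) = z]} ->
  ~~ odd (size s).
Proof.
have [n] := ubnP (size s); elim: n s => // n IH [|z s] //= /ltnSE le_s_n.
move=> /andP[zNs s_uniq] f_inv.
have [fz_in fzNz ffz] := f_inv z (mem_head _ _).
have fz_s : f z \in s by rewrite inE (negbTE fzNz) in fz_in.
have size_s : size s = (size (rem (f z) s)).+1.
  by rewrite size_rem // prednK //; case: (s) fz_s.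
rewrite size_s /= negbK; apply: IH; [by rewrite size_s in le_s_n; apply: ltnW | exact: rem_uniq |].
move=> w; rewrite (mem_rem_uniq _ s_uniq) => /andP[wNfz w_s].
have [fw_in fwNw ffw] := f_inv w (@mem_behead _ (z :: s) _ w_s).
have fwNz : f w != z by apply: contraNneq wNfz => <-; rewrite ffw.
split=> //; rewrite (mem_rem_uniq _ s_uniq) inE.
apply/andP; split; first by apply: contraNneq zNs => /(congr1 f); rewrite ffw ffz => <-.
by rewrite inE (negbTE fwNz) in fw_in.
Qed.

Lemma count_parity_iota (b : bool) a n : count (fun z => odd z == b) (iota a n.*2) = n.
Proof. by elim: n a => //= n IH a; rewrite IH; case: (odd a); case: (b). Qed.

(* For k = i the arc from i to k is the whole circle but i. *)
Definition cyc_between (i k j : nat) : bool :=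
  (i < j < k) || (k <= i) && ((i < j) || (j < k)).

Lemma head_sorted_ltn_le (s : seq nat) x0 j : sorted ltn s -> j \in s -> head x0 s <= j.
Proof.
case: s => //= h t; rewrite (path_sortedE ltn_trans) inE.
by case/andP=> /allP h_lt _ /predU1P[->|/h_lt/ltnW].
Qed.

Lemma next_sorted_ltn (s : seq nat) (i k : nat) : sorted ltn s -> i \in s -> k \in s ->
  {in s, forall j, ~~ cyc_between i k j} -> next s i = k.
Proof.
move=> s_sorted i_s k_s k_first.
suff [h [h_s h_first ->]] : exists h, [/\ h \in s, {in s, forall j, ~~ cyc_between i h j}
                                          & next s i = h].
  by have := k_first h h_s; have := h_first k k_s; rewrite /cyc_between; lia.
have s_uniq := sorted_uniq ltn_trans ltnn s_sorted.
case/splitPr: i_s s_sorted s_uniq => s1 s2 s_sorted s_uniq.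
have -> : next (s1 ++ i :: s2) i = head i (s2 ++ s1).
  rewrite -(next_rot (size s1) s_uniq) rot_size_cat /=.
  by case: (s2 ++ s1) => [|h t] /=; rewrite eqxx.
move: s_sorted; rewrite (sorted_pairwise ltn_trans) pairwise_cat pairwise_cons allrel_consr.
rewrite -!(sorted_pairwise ltn_trans) => /and3P[/andP[/allP s1_lt _] s1_sorted].
case/andP=> /allP s2_gt s2_sorted; clear s_uniq.
have s1_min := head_sorted_ltn_le i s1_sorted; have s2_min := head_sorted_ltn_le i s2_sorted.
clear s1_sorted s2_sorted; case: s2 => [|h t] in s2_gt s2_min * => /=.
  exists (head i s1); split=> [|j|//].
    by case: s1 {s1_lt s1_min} => [|h t]; rewrite /= !(mem_cat, inE, eqxx, orbT).
  have h_le_i : head i s1 <= i by case: s1 s1_lt {s1_min} => //= h t /(_ h (mem_head _ _)) /ltnW.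
  rewrite mem_cat inE /cyc_between.
  by case/orP=> [/[dup]/s1_lt ? /s1_min ?|/eqP->]; lia.
exists h; split=> [|j|//]; first by rewrite mem_cat !inE eqxx !orbT.
have h_gt_i := s2_gt h (mem_head _ _).
rewrite mem_cat !inE /cyc_between.
by case/or3P=> [/s1_lt|/eqP->|/s2_min /=]; lia.
Qed.

Lemma block_perm_cyc_next d (r : rel 'I_d) (i k : 'I_d) : r i i -> r i k ->
  (forall j, r i j -> ~~ cyc_between i k j) -> block_perm r i = k.
Proof.
move=> rii rik k_first; apply: val_inj.
rewrite /= -(next_map val_inj (filter_uniq _ (enum_uniq _))).
apply: next_sorted_ltn.
- rewrite sorted_map; apply: sorted_filter; first exact: (fun j => @ltn_trans j).
  by rewrite -sorted_map val_enum_ord iota_ltn_sorted.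
- by rewrite map_f // mem_filter rii mem_enum.
- by rewrite map_f // mem_filter rik mem_enum.
- by move=> x /mapP[j]; rewrite mem_filter => /andP[/k_first ? _] ->.
Qed.

Lemma eq_block_perm d (r1 r2 : rel 'I_d) : r1 =2 r2 -> block_perm r1 =1 block_perm r2.
Proof. by move=> eq_r i; rewrite /block_perm (eq_filter (eq_r i)). Qed.

Definition cyc_succ (n x : nat) : nat := if x.+1 < n then x.+1 else 0.
Definition cyc_pred (n x : nat) : nat := if 0 < x then x.-1 else n.-1.

Lemma same_region_refl d S m x : same_region d S m x x.
Proof. by apply/forallP => p; rewrite eqxx implybT. Qed.

Lemma same_region_sym d S m x y : same_region d S m x y -> same_region d S m y x.
Proof. by move/forallP=> xy; apply/forallP => p; rewrite eq_sym; apply: xy. Qed.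

Section NoncrossingRegions.

Variables (d : nat) (b : bool) (S : pred nat) (m : nat -> nat).
Hypothesis S_parity : forall z, S z = (z < 4 * d) && (odd z == b).
Hypothesis m_nc : nc_matching S m.

Local Notation region := (same_region d S m).

Definition matching_closed (A : pred nat) := forall p, S p -> A p -> A (m p).

Lemma matching_in p : S p -> [/\ S (m p), m p != p & m (m p) = p].
Proof. exact: m_nc.1. Qed.

Lemma matching_mod4 a : S a -> m a = a + 2 %[mod 4].
Proof.
wlog lt_a : a / a < m a => [wlog_a Sa|Sa].
  have [Sma maNa mma] := matching_in Sa.
  case: (ltngtP a (m a)) => [/wlog_a/(_ Sa) //|gt_a|eq_a]; last by rewrite -eq_a eqxx in maNa.
  by have := wlog_a (m a); rewrite mma => /(_ gt_a Sma); lia.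
have [Sma _ _] := matching_in Sa.
have [ma_lt odd_ma] : m a < 4 * d /\ odd (m a) = b by rewrite S_parity in Sma; lia.
have odd_a : odd a = b by rewrite S_parity in Sa; lia.
set s := [seq z <- iota a.+1 (m a - a.+1) | S z].
have s_even : ~~ odd (size s).
  apply: (@fixfree_involution_size_even _ m); first by rewrite filter_uniq ?iota_uniq.
  move=> z; rewrite mem_filter mem_iota => /andP[Sz z_in].
  have [Smz mzNz mmz] := matching_in Sz.
  have : inside a (m a) (m z) by rewrite -m_nc.2 // /inside; lia.
  by rewrite /inside => mz_in; split=> //; rewrite mem_filter Smz mem_iota; lia.
set n := (m a - a.+2) %/ 2.
have size_s : size s = n.
  rewrite size_filter (eq_in_count (a2 := fun z => odd z == b)) => [|z]; last first.
    by rewrite mem_iota S_parity; lia.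
  rewrite (_ : m a - a.+1 = (n.*2).+1); last lia.
  by rewrite /= count_parity_iota odd_a; case: (b).
by rewrite size_s in s_even; lia.
Qed.

Lemma same_regionP x y :
  reflect (forall p, S p -> inside p (m p) x = inside p (m p) y) (region x y).
Proof.
apply: (iffP forallP) => [xy p Sp|xy p]; last by apply/implyP => /xy ->.
have p_lt : p < 4 * d by rewrite S_parity in Sp; case/andP: Sp.
by have /implyP/(_ Sp)/eqP := xy (Ordinal p_lt).
Qed.

Lemma same_region_of_closed x y : ~~ S x -> ~~ S y -> matching_closed (inside x y) -> region x y.
Proof.
move=> Sx Sy xy_closed; apply/same_regionP => p Sp.
have [Smp _ mmp] := matching_in Sp.
have [pNx pNy] : p != x /\ p != y by split; [apply: contraNneq Sx|apply: contraNneq Sy] => <-.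
have [mpNx mpNy] : m p != x /\ m p != y.
  by split; [apply: contraNneq Sx|apply: contraNneq Sy] => <-.
have : inside x y p = inside x y (m p).
  by apply/idP/idP => [/xy_closed->//|/xy_closed]; rewrite mmp; apply.
rewrite /inside; lia.
Qed.

Lemma eq_matching_closed A B :
  (forall p, S p -> A p = B p) -> matching_closed A -> matching_closed B.
Proof.
move=> eqAB A_closed p Sp; have [Smp _ _] := matching_in Sp.
by rewrite -eqAB // -eqAB //; apply: A_closed.
Qed.

Lemma matching_closedC A : matching_closed A -> matching_closed (predC A).
Proof.
move=> A_closed p Sp; have [Smp _ mmp] := matching_in Sp.
by apply: contra => /(A_closed _ Smp); rewrite mmp.
Qed.

Lemma chord_interior_closed a : S a -> matching_closed (inside a (m a)).
Proof. by move=> Sa p Sp; rewrite m_nc.2. Qed.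

Lemma chord_hull_closed a : S a -> matching_closed (fun p => minn a (m a) <= p <= maxn a (m a)).
Proof.
move=> Sa p Sp; have [_ _ mma] := matching_in Sa.
have := chord_interior_closed Sa Sp; rewrite /inside.
case: (eqVneq p a) => [->|pNa]; first lia.
case: (eqVneq p (m a)) => [->|pNma]; rewrite ?mma; lia.
Qed.

Lemma same_region_chord_ends a : S a ->
  region (cyc_pred (4 * d) a) (cyc_succ (4 * d) (m a)) /\
  region (cyc_succ (4 * d) a) (cyc_pred (4 * d) (m a)).
Proof.
wlog lt_a : a / a < m a => [wlog_a Sa|Sa].
  have [Sma maNa mma] := matching_in Sa.
  case: (ltngtP a (m a)) => [/wlog_a/(_ Sa) //|gt_a|eq_a]; last by rewrite -eq_a eqxx in maNa.
  have := wlog_a (m a); rewrite mma => /(_ gt_a Sma) [? ?].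
  by split; apply: same_region_sym.
have [Sma _ _] := matching_in Sa.
have S_bounds p : S p -> p < 4 * d /\ odd p = b by rewrite S_parity; lia.
have [[a_lt odd_a] [ma_lt odd_ma]] := (S_bounds a Sa, S_bounds _ Sma).
split; apply: same_region_of_closed.
- by rewrite S_parity /cyc_pred; case: ifP; lia.
- by rewrite S_parity /cyc_succ; case: ifP; lia.
- pose hull p := minn a (m a) <= p <= maxn a (m a).
  (* The arc between the outer neighbours is the hull, or its complement when it passes 0. *)
  have [wrap|no_wrap] := boolP ((a == 0) || ((m a).+1 == 4 * d)).
    apply: (@eq_matching_closed (fun p => ~~ hull p)); last first.
      exact/matching_closedC/chord_hull_closed.
    move=> p /S_bounds[p_lt odd_p]; move: wrap.
    by rewrite /inside /hull /cyc_pred /cyc_succ; do ![case: ifP]; lia.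
  apply: (@eq_matching_closed hull); last exact: chord_hull_closed.
  move=> p /S_bounds[p_lt odd_p]; move: no_wrap.
  by rewrite /inside /hull /cyc_pred /cyc_succ; do ![case: ifP]; lia.
- by rewrite S_parity /cyc_succ; case: ifP; lia.
- by rewrite S_parity /cyc_pred; case: ifP; lia.
- apply: (@eq_matching_closed (inside a (m a))); last exact: chord_interior_closed.
  move=> p /S_bounds[p_lt odd_p]; rewrite /inside /cyc_pred /cyc_succ.
  by case: ifP; case: ifP; lia.
Qed.

End NoncrossingRegions.

Lemma ordS_cyc_succ n (i : 'I_n) : ordS i = cyc_succ n i :> nat.
Proof.
have lt_i := ltn_ord i; rewrite /= /cyc_succ; case: ifP => [|/negbT n_le]; first exact: modn_small.
by rewrite (_ : i.+1 = n) ?modnn //; lia.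
Qed.

(* [e = 0] handles left-right matchings (rY, rX relate top, bottom points),
   [e = 1] top-bottom ones (rY, rX relate left, right points). *)
Section ChordPermutations.

Variables (d e : nat) (S : pred nat) (m : nat -> nat).
Hypothesis e_le1 : e <= 1.
Hypothesis S_parity : forall z, S z = (z < 4 * d) && (odd z == ~~ odd e).
Hypothesis m_nc : nc_matching S m.

Local Notation region := (same_region d S m).

Lemma block_perm_chord (rY rX : rel 'I_d) :
  (forall j k, rY j k = region (4 * j + e) (4 * k + e)) ->
  (forall j k, rX j k = region (4 * j + e.+2) (4 * k + e.+2)) ->
  forall i, block_perm rY (block_perm rX i) = ordS i.
Proof.
move=> rY_def rX_def i; rewrite (eq_block_perm rY_def) (eq_block_perm rX_def).
have lt_i := ltn_ord i.
set c := cyc_succ (4 * d) (4 * i + e.+2).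
have c_val : (c == 4 * i + e + 3) && (c < 4 * d) || [&& e == 1, i.+1 == d & c == 0].
  by rewrite /c /cyc_succ; case: ifP; lia.
have Sc : S c by rewrite S_parity; lia.
have [Sq qNc _] := matching_in m_nc Sc.
have := matching_mod4 S_parity m_nc Sc; rewrite S_parity in Sq.
set q := m c in Sq qNc * => q_mod4.
have lt_k : q %/ 4 < d by lia.
pose k := Ordinal lt_k.
have q_val : q = 4 * k + e + 1 by rewrite /=; lia.
have sep x y : region x y -> inside c q x = inside c q y.
  by move/(same_regionP m S_parity) => /(_ c Sc).
have [pred_c succ_c] : cyc_pred (4 * d) c = 4 * i + e.+2 /\ cyc_succ (4 * d) c = 4 * ordS i + e.
  by rewrite ordS_cyc_succ /cyc_pred /cyc_succ; do ![case: ifP]; lia.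
have [pred_q succ_q] : cyc_pred (4 * d) q = 4 * k + e /\ cyc_succ (4 * d) q = 4 * k + e.+2.
  by rewrite /cyc_pred /cyc_succ; do ![case: ifP]; lia.
have [] := same_region_chord_ends S_parity m_nc Sc.
rewrite -/q pred_c succ_c pred_q succ_q => region_X /same_region_sym region_Y.
have -> : block_perm (fun j k : 'I_d => region (4 * j + e.+2) (4 * k + e.+2)) i = k.
  apply: block_perm_cyc_next => [|//|j /sep]; first exact: same_region_refl.
  by have := ltn_ord j; rewrite /inside /cyc_between; lia.
apply: block_perm_cyc_next => [|//|j /sep]; first exact: same_region_refl.
by have := ltn_ord j; rewrite /inside /cyc_between ordS_cyc_succ /cyc_succ; case: ifP; lia.
Qed.

End ChordPermutations.

Theorem proposition4p22 (d : nat) (hd : 0 < d) :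
  (forall m : nat -> nat, nc_matching (S_LR d) m ->
     forall i : 'I_d, pi_T m (pi_B m i) = ordS i) /\
  (forall m : nat -> nat, nc_matching (S_TB d) m ->
     forall i : 'I_d, pi_L m (pi_R m i) = ordS i).
Proof.
split=> m m_nc i.
- have S_parity z : S_LR d z = (z < 4 * d) && (odd z == ~~ odd 0) by rewrite /S_LR eqb_id.
  by apply: (block_perm_chord _ S_parity m_nc) => // j k; rewrite !addn0.
- have S_parity z : S_TB d z = (z < 4 * d) && (odd z == ~~ odd 1) by rewrite /S_TB eqbF_neg.
  by apply: (block_perm_chord _ S_parity m_nc).
Qed.
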